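(* Let $n\geq 1$. No automorphism of a thick building of type $\mathsf{A}_n\times\mathsf{A}_n$ that interchanges the two components and acts as an involution on the type set is domestic.
   Context: A building of type $\mathsf{A}_n\times\mathsf{A}_n$ is a product of two buildings of type $\mathsf{A}_n$; its type set is the disjoint union of the two type sets, and an automorphism is a simplicial automorphism, inducing a permutation of the type set. Chambers are opposite if they are at maximal gallery distance; an automorphism is domestic if it maps no chamber to an opposite chamber. *)

(* Buildings are given via the W-metric (Weyl distance)
   approach of Abramenko--Brown, "Buildings", Ch. 5. *)
From HB Require Import structures.
From mathcomp Require Import all_boot all_order all_fingroup.
From mathcomp Require Import gproduct.
Set Implicit Arguments.
Unset Strict Implicit.
Unset Printing Implicit Defensive.
Import GroupScope.

Section Coxeter.
Variables (gT : finGroupType) (S : {set gT}).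

Definition wordb (w : gT) (k : nat) : bool :=
  [exists t : k.-tuple gT, all (mem S) t && (\prod_(x <- t) x == w)].

Definition wlen (w : gT) : nat := find (wordb w) (iota 0 #|gT|.+1).

Definition is_building (Ch : Type) (delta : Ch -> Ch -> gT) : Prop :=
  [/\ inhabited Ch,
      (forall C D, delta C D = 1 <-> C = D),
      (forall C D C' s, s \in S -> delta C' C = s ->
          (delta C' D = s * delta C D \/ delta C' D = delta C D) /\
          (wlen (s * delta C D) = (wlen (delta C D)).+1 ->
             delta C' D = s * delta C D)) &
      (forall C D s, s \in S ->
          exists C', delta C' C = s /\ delta C' D = s * delta C D)].

(* thickness: every panel contains at least three chambers *)
Definition thick (Ch : Type) (delta : Ch -> Ch -> gT) : Prop :=
  forall C s, s \in S -> exists D1 D2,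
    [/\ delta C D1 = s, delta C D2 = s & D1 <> D2].

Variables (Ch : Type) (delta : Ch -> Ch -> gT).

Definition adjacent (C D : Ch) : Prop := delta C D \in S.

Definition gallery (k : nat) (C D : Ch) : Prop :=
  exists f : nat -> Ch, [/\ f 0 = C, f k = D &
    forall i, i < k -> adjacent (f i) (f i.+1)].

Definition gallery_dist (C D : Ch) (k : nat) : Prop :=
  gallery k C D /\ forall k', gallery k' C D -> k <= k'.

Definition opposite (C D : Ch) : Prop :=
  exists k, gallery_dist C D k /\
    forall X Y k', gallery_dist X Y k' -> k' <= k.

Definition is_automorphism (phi : Ch -> Ch) (tau : gT -> gT) : Prop :=
  [/\ bijective phi,
      {in S, forall s, tau s \in S},
      {in S &, injective tau} &
      forall C D s, s \in S -> (delta C D = s <-> delta (phi C) (phi D) = tau s)].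

Definition domestic (phi : Ch -> Ch) : Prop := forall C, ~ opposite C (phi C).

End Coxeter.

(* The Coxeter system of type A_n x A_n: W = Sym(n+1) x Sym(n+1) *)
Definition WAA (n : nat) : finGroupType := ('S_n.+1 * 'S_n.+1)%type.

(* simple reflection (i, i+1) in Sym(n+1), for i < n *)
Definition sref (n : nat) (i : 'I_n) : 'S_n.+1 :=
  tperm (widen_ord (leqnSn n) i) (lift ord0 i).

Definition S1 (n : nat) : {set WAA n} := [set ((sref i, 1) : WAA n) | i : 'I_n].
Definition S2 (n : nat) : {set WAA n} := [set ((1, sref i) : WAA n) | i : 'I_n].
Definition SAA (n : nat) : {set WAA n} := S1 n :|: S2 n.

(* Choose a chamber C whose displacement w = δ(C, Cφ) has maximal length.  If
   some generator s had ℓ(sw) > ℓ(w), every other chamber D of the s-panel of C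
   would have displacement s·w·τ(s) (the alternative s·w is too long), and
   comparing two such chambers D, D', which exist by thickness, through
   δ(D, D'φ) = s·w forces s·w = w·τ(s), i.e. τ(s) = s^w.  When τ swaps the two
   factors of A_n × A_n, τ(s) is never conjugate to s, so every generator is a
   left descent of w; hence w is the longest element and C is opposite Cφ.
   Lengths are computed as the sum of the inversion numbers of the two
   factors; only the formal properties of this function are used, and they
   force it to agree with the word length. *)

From HB Require Import structures.
From mathcomp Require Import all_boot all_order all_fingroup.
From mathcomp Require Import gproduct.
From mathcomp Require Import zify.
From Stdlib Require Import Classical.

Set Implicit Arguments.
Unset Strict Implicit.
Unset Printing Implicit Defensive.
Import GroupScope.

Lemma bounded_fun_has_max (T : Type) (g : T -> nat) (B : nat) :
  inhabited T -> (forall x, g x <= B) -> exists x0, forall x, g x <= g x0.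
Proof.
move=> [x1] le_gB; apply: NNPP => no_max.
have above x0 : exists x, g x0 < g x.
  apply: NNPP => not_above; apply: no_max; exists x0 => x.
  by rewrite leqNgt; apply/negP => lt; apply: not_above; exists x.
suff /(_ B.+1) [x] : forall k, exists x, k <= g x by rewrite leqNgt ltnS le_gB.
elim=> [|k [x le_kx]]; first by exists x1.
by have [y lt_xy] := above x; exists y; apply: leq_ltn_trans lt_xy.
Qed.

Section LengthFunction.
Variables (gT : finGroupType) (S : {set gT}) (len : gT -> nat).
Hypotheses (mulSS : {in S, forall s, s * s = 1}) (len1 : len 1 = 0)
  (lenSM : {in S, forall s w, len (s * w) = (len w).+1 \/ (len (s * w)).+1 = len w})
  (len_descent : forall w, w != 1 -> exists2 s, s \in S & (len (s * w)).+1 = len w).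

Lemma lenS s : s \in S -> len s = 1%N.
Proof. by move=> sS; have := lenSM sS 1; rewrite mulg1 len1; case. Qed.

Lemma S_neq1 s : s \in S -> s != 1.
Proof. by move=> /lenS; apply: contraPneq => ->; rewrite len1. Qed.

Lemma SinvE s : s \in S -> s^-1 = s.
Proof. by move=> sS; apply/eqP; rewrite eq_invg_mul mulSS. Qed.

Lemma len_ind (P : gT -> Prop) : P 1 ->
    (forall s w, s \in S -> (len (s * w)).+1 = len w -> P (s * w) -> P w) ->
  forall w, P w.
Proof.
move=> P1 Pstep w; have [k] := ubnP (len w); elim: k w => // k IH w.
have [-> //|w_neq1 lt_wk] := eqVneq w 1.
have [s sS len_sw] := len_descent w_neq1.
by apply: (Pstep s) => //; apply: IH; rewrite -ltnS len_sw.
Qed.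

Lemma len_prod_le (s : seq gT) : all (mem S) s -> len (\prod_(x <- s) x) <= size s.
Proof.
elim: s => [|x s IH] /=; first by rewrite big_nil len1.
case/andP=> xS sS; rewrite big_cons.
move: (IH sS); case: (lenSM xS (\prod_(y <- s) y)) => [->|<-] //.
by move/ltnW/leqW.
Qed.

Lemma reduced_word w :
  exists s : seq gT, [/\ all (mem S) s, size s = len w & \prod_(x <- s) x = w].
Proof.
elim/len_ind: w => [|s w sS len_sw [t [tS size_t prod_t]]].
  by exists [::]; rewrite big_nil len1.
exists (s :: t); split; rewrite /= ?sS ?size_t ?len_sw //.
by rewrite big_cons prod_t mulgA mulSS // mul1g.
Qed.

Lemma len_attained w k : k <= len w -> exists u, len u = k.
Proof.
elim/len_ind: w k => [k|s w sS len_sw IH k le_kw]; first by rewrite len1 leqn0 => /eqP ->; exists 1.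
have [-> | ne_kw] := eqVneq k (len w); first by exists w.
by apply: IH; rewrite -ltnS len_sw ltn_neqAle ne_kw.
Qed.

Lemma len_lt_card w : len w < #|gT|.
Proof.
rewrite cardE -(size_map len) -(size_iota 0 (len w).+1).
apply: uniq_leq_size (iota_uniq 0 _) _ => k; rewrite mem_iota add0n ltnS => /andP[_ le_kw].
by have [u <-] := len_attained le_kw; apply: map_f; rewrite mem_enum.
Qed.

Lemma wlenE w : wlen S w = len w.
Proof.
have word_ge k : wordb S w k -> len w <= k.
  by case/existsP=> t /andP[tS /eqP <-]; have := len_prod_le tS; rewrite size_tuple.
have word_len : wordb S w (len w).
  have [s [sS size_s prod_s]] := reduced_word w.
  by apply/existsP; exists (Tuple (introT eqP size_s)); rewrite /= sS prod_s eqxx.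
have le_w_card : len w <= #|gT| by rewrite ltnW ?len_lt_card.
rewrite /wlen; case: findP => [/hasPn no_word | i]; rewrite size_iota.
  by have := no_word (len w); rewrite mem_iota add0n ltnS le_w_card word_len => /(_ isT).
move=> lt_i word_i before_i; apply/eqP; rewrite eqn_leq word_ge ?andbT; last first.
  by have := word_i 0; rewrite nth_iota.
rewrite leqNgt; apply/negP => lt_wi.
by have := before_i 0 _ lt_wi; rewrite nth_iota ?add0n ?word_len // (ltn_trans lt_wi).
Qed.

Lemma prod_rev (s : seq gT) :
  all (mem S) s -> \prod_(x <- rev s) x = (\prod_(x <- s) x)^-1.
Proof.
elim: s => [|x s IH] /=; first by rewrite big_nil invg1.
case/andP=> xS sS; rewrite rev_cons -cats1 big_cat big_seq1 /= IH //.
by rewrite big_cons invMg (SinvE xS).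
Qed.

Lemma lenV w : len w^-1 = len w.
Proof.
suff le_lenV v : len v^-1 <= len v by apply/eqP; rewrite eqn_leq le_lenV -{1}(invgK w) le_lenV.
have [s [sS size_s prod_s]] := reduced_word v.
by rewrite -{1}prod_s -prod_rev // -size_s -size_rev len_prod_le // all_rev.
Qed.

Lemma lenMS t w : t \in S -> len (w * t) = (len w).+1 \/ (len (w * t)).+1 = len w.
Proof. by move=> tS; rewrite -lenV invMg SinvE // -(lenV w); apply: lenSM. Qed.

Section WeylDistance.
Variables (Ch : Type) (delta : Ch -> Ch -> gT).
Hypotheses (WD1 : forall C D, delta C D = 1 <-> C = D)
  (WD2 : forall C D C' s, s \in S -> delta C' C = s ->
     (delta C' D = s * delta C D \/ delta C' D = delta C D) /\
     (len (s * delta C D) = (len (delta C D)).+1 -> delta C' D = s * delta C D))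
  (WD3 : forall C D s, s \in S ->
     exists C', delta C' C = s /\ delta C' D = s * delta C D).

Lemma delta_refl C : delta C C = 1.
Proof. exact/WD1. Qed.

Lemma chamber_ind (D : Ch) (P : Ch -> Prop) : P D ->
    (forall C C' s, s \in S -> delta C' C = s -> delta C' D = s * delta C D ->
       (len (s * delta C D)).+1 = len (delta C D) -> P C' -> P C) ->
  forall C, P C.
Proof.
move=> PD Pstep C; have [k] := ubnP (len (delta C D)); elim: k C => // k IH C.
have [/WD1 -> // | ne1 lt_k] := eqVneq (delta C D) 1.
have [s sS len_s] := len_descent ne1; have [C' [C'C C'D]] := WD3 C D sS.
by apply: (Pstep C C' s) => //; apply: IH; rewrite C'D -ltnS len_s.
Qed.

Lemma delta_symS C C' s : s \in S -> delta C' C = s -> delta C C' = s.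
Proof.
move=> sS C'C; have [[e|e] _] := WD2 C' sS C'C; rewrite delta_refl in e.
  by apply/eqP; rewrite -(SinvE sS) eq_sym eq_invg_mul -e.
have eqCC' : C = C' by apply/WD1; rewrite e.
by have := S_neq1 sS; rewrite -C'C eqCC' delta_refl eqxx.
Qed.

Lemma panel_trans X Y Z s : s \in S ->
  delta X Y = s -> delta Y Z = s -> X <> Z -> delta X Z = s.
Proof.
move=> sS XY YZ neXZ; have [[e|e] _] := WD2 Z sS XY; rewrite YZ ?mulSS // in e.
by case: neXZ; apply/WD1.
Qed.

Lemma delta_mulS_up C D E t : t \in S -> delta D E = t ->
  len (delta C D * t) = (len (delta C D)).+1 -> delta C E = delta C D * t.
Proof.
move=> tS DE; elim/(@chamber_ind D): C => [|C C' s sS C'C C'D len_s IH up].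
  by rewrite delta_refl mul1g.
have up' : len (delta C' D * t) = (len (delta C' D)).+1.
  have := lenSM sS (delta C D * t); have := lenMS (s * delta C D) tS.
  (* With u := delta C D, len (s u t) is within 1 of both len (u t) = len u + 1
     and len (s u) = len u - 1. *)
  rewrite C'D -!mulgA; move: up len_s.
  by set a := len (s * _); set b := len (s * _); set c := len (_ * t); lia.
have sust : s * (s * delta C D * t) = delta C D * t by rewrite !mulgA mulSS // mul1g.
have [_ up_E] := WD2 E sS (delta_symS sS C'C).
rewrite (IH up') C'D sust in up_E; apply: up_E.
by rewrite C'D in up'; rewrite up up' -len_s.
Qed.

Lemma deltaV C D : delta D C = (delta C D)^-1.
Proof.
elim/(@chamber_ind D): C => [|C C' s sS C'C C'D len_s IH].
  by rewrite delta_refl invg1.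
have C'D_s : (delta C' D)^-1 * s = (delta C D)^-1.
  by rewrite C'D invMg (SinvE sS) -mulgA mulSS // mulg1.
rewrite -C'D_s -IH; apply: delta_mulS_up sS C'C _.
by rewrite IH C'D_s !lenV C'D len_s.
Qed.

Lemma delta_mulS C D E t : t \in S -> delta D E = t ->
  delta C E = delta C D * t \/ delta C E = delta C D.
Proof.
move=> tS DE; have [[e|e] _] := WD2 C tS (delta_symS tS DE).
  by left; apply: invg_inj; rewrite invMg (SinvE tS) -!deltaV.
by right; apply: invg_inj; rewrite -!deltaV.
Qed.

Lemma len_delta_le_gallery k C D : gallery S delta k C D -> len (delta C D) <= k.
Proof.
elim: k C D => [|k IH] C D [g [<- <- adj]]; first by rewrite delta_refl len1.
have /IH le_k : gallery S delta k (g 1%N) (g k.+1).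
  by exists (fun i => g i.+1); split=> // i lt_ik; apply: adj.
have sS : delta (g 0) (g 1%N) \in S by apply: adj.
have [[->|->] _] := WD2 (g k.+1) sS (erefl _); last exact: leqW.
by move: le_k; case: (lenSM sS (delta (g 1%N) (g k.+1))) => [->|<-] // /ltnW/leqW.
Qed.

Lemma gallery_len_delta C D : gallery S delta (len (delta C D)) C D.
Proof.
elim/(@chamber_ind D): C => [|C C' s sS C'C C'D len_s [g [g0 gD adj]]].
  by rewrite delta_refl len1; exists (fun=> D).
rewrite -len_s -C'D; exists (fun i => if i is j.+1 then g j else C).
split=> // -[|i] lt_i /=; last exact: adj.
by rewrite /adjacent g0 (delta_symS sS C'C).
Qed.

Lemma gallery_distE C D k : gallery_dist S delta C D k -> k = len (delta C D).
Proof.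
case=> /len_delta_le_gallery le_k min_k.
by apply/eqP; rewrite eqn_leq le_k andbT; apply/min_k/gallery_len_delta.
Qed.

Lemma opposite_of_len_max C D :
  (forall X Y, len (delta X Y) <= len (delta C D)) -> opposite S delta C D.
Proof.
move=> max_CD; exists (len (delta C D)); split; last by move=> X Y k /gallery_distE ->.
by split=> [|k /len_delta_le_gallery //]; apply: gallery_len_delta.
Qed.

Section Displacement.
Variables (phi : Ch -> Ch) (tau : gT -> gT).
Hypotheses (tauS : {in S, forall s, tau s \in S})
  (phi_adj : forall C D s, s \in S -> delta C D = s -> delta (phi C) (phi D) = tau s)
  (thickS : thick S delta).

Section MaxDisplacement.
Variable C0 : Ch.
Hypothesis C0_max : forall C, len (delta C (phi C)) <= len (delta C0 (phi C0)).
Local Notation w := (delta C0 (phi C0)).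

Lemma panel_displacement s X : s \in S -> len (s * w) = (len w).+1 ->
  delta C0 X = s -> delta X (phi X) = s * w * tau s.
Proof.
move=> sS up C0X; have [_ XphiC0] := WD2 (phi C0) sS (delta_symS sS C0X).
have {}XphiC0 := XphiC0 up.
have [-> | disp_X] := delta_mulS X (tauS sS) (phi_adj sS C0X); first by rewrite XphiC0.
by have := C0_max X; rewrite disp_X XphiC0 up ltnn.
Qed.

Lemma max_displacement_ascent s : s \in S -> len (s * w) = (len w).+1 ->
  s * w = w * tau s.
Proof.
move=> sS up; have tS := tauS sS.
have [D1 [D2 [C0D1 C0D2 neD12]]] := thickS C0 sS.
have disp1 := panel_displacement sS up C0D1.
have disp2 := panel_displacement sS up C0D2.
have D12 : delta D1 D2 = s := panel_trans sS (delta_symS sS C0D1) C0D2 neD12.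
have down : (len (s * w * tau s)).+1 = len (s * w).
  have := C0_max D1; rewrite disp1.
  by case: (lenMS (s * w) tS) => [-> | //]; rewrite up => /ltnW; rewrite ltnn.
have swtt : s * w * tau s * tau s = s * w by rewrite -mulgA mulSS ?mulg1.
have D1phiD2 : delta D1 (phi D2) = s * w.
  rewrite -swtt -disp1; apply: delta_mulS_up tS (phi_adj sS D12) _.
  by rewrite disp1 swtt -down.
have [[e|e] _] := WD2 (phi D2) sS (delta_symS sS D12); rewrite disp2 D1phiD2 in e.
  by rewrite mulgA mulSS // mul1g in e; rewrite -{2}e -mulgA mulSS ?mulg1.
by case/eqP: (S_neq1 tS); apply: (mulgI (s * w)); rewrite e mulg1.
Qed.

End MaxDisplacement.

Lemma not_domestic_of_twist :
    (forall s w, s \in S -> tau s != s ^ w) ->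
    (forall w, {in S, forall s, (len (s * w)).+1 = len w} -> forall u, len u <= len w) ->
  inhabited Ch -> ~ domestic S delta phi.
Proof.
move=> twist longest inhCh.
have [C0 C0_max] := @bounded_fun_has_max _ (fun C => len (delta C (phi C))) #|gT|
  inhCh (fun C => ltnW (len_lt_card _)).
move/(_ C0); apply; apply: opposite_of_len_max => X Y; apply: longest => s sS.
have [up | //] := lenSM sS (delta C0 (phi C0)).
have := twist s (delta C0 (phi C0)) sS.
by rewrite conjgE (max_displacement_ascent C0_max sS up) mulKg eqxx.
Qed.

End Displacement.

End WeylDistance.

End LengthFunction.

Lemma incr_bounded_id m (g : nat -> nat) :
    {in gtn m &, {homo g : i j / i < j}} -> {in gtn m, forall i, g i < m} ->
  {in gtn m, forall i, g i = i}.
Proof.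
have ge_id h : {in gtn m &, {homo h : i j / i < j}} -> {in gtn m, forall k, k <= h k}.
  move=> h_incr; elim=> // k IH lt_km.
  by apply: leq_ltn_trans (IH (ltnW lt_km)) (h_incr _ _ (ltnW lt_km) lt_km _).
move=> g_incr g_lt k lt_km; apply/eqP; rewrite eqn_leq ge_id // andbT.
(* The reflection [h] of [g] is increasing too, and [k <= h k] at [m.-1 - k]
   reads [g k <= k]. *)
pose h j := m.-1 - g (m.-1 - j).
have lt_rev j : j < m -> m.-1 - j < m by lia.
have h_incr : {in gtn m &, {homo h : i j / i < j}}.
  move=> i j lt_im lt_jm lt_ij; rewrite /h.
  have := g_lt _ (lt_rev i lt_im); have := g_incr _ _ (lt_rev j lt_jm) (lt_rev i lt_im).
  by move: lt_jm; rewrite unfold_in /=; lia.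
have := ge_id h h_incr _ (lt_rev k lt_km); have := g_lt k lt_km; rewrite /h.
by move: lt_km; rewrite unfold_in /= => lt_km; rewrite subKn; lia.
Qed.

Definition ninv m (sg : 'S_m) : nat :=
  #|[set p : 'I_m * 'I_m | (p.1 < p.2) && (sg p.2 < sg p.1)]|.

Lemma ninv1 m : ninv (1 : 'S_m) = 0.
Proof.
apply/eqP; rewrite cards_eq0; apply/eqP/setP => p; rewrite !inE !perm1.
by apply/negbTE; rewrite negb_and -leqNgt orbC -implybE; apply/implyP/ltnW.
Qed.

Lemma ninv_le_reversal m (u v : 'S_m) :
  (forall x y : 'I_m, x < y -> v y < v x) -> ninv u <= ninv v.
Proof.
move=> rev_v; apply/subset_leq_card/subsetP => p; rewrite !inE.
by case/andP=> lt_p _; rewrite lt_p rev_v.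
Qed.

Section AdjacentTransposition.
Variables (n : nat) (i : 'I_n).
Local Notation a := (widen_ord (leqnSn n) i).
Local Notation b := (lift ord0 i).

Lemma val_lift0 : val b = i.+1.
Proof. by rewrite /= /bump leq0n. Qed.

Lemma sref_val x : val (sref i x) = if x == a then i.+1 else if x == b then val i else val x.
Proof.
rewrite /sref; case: tpermP => [->|->|/eqP ne_xa /eqP ne_xb]; rewrite ?eqxx ?val_lift0 //.
  by rewrite -val_eqE val_lift0 /= gtn_eqF.
by rewrite (negbTE ne_xa) (negbTE ne_xb).
Qed.

Lemma sref_a : sref i a = b. Proof. exact: tpermL. Qed.
Lemma sref_b : sref i b = a. Proof. exact: tpermR. Qed.

Lemma sref_neq1 : sref i != 1.
Proof. by apply/eqP => /permP/(_ a)/(congr1 val); rewrite sref_val eqxx perm1 /=; lia. Qed.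

Lemma sref_lt x y : ~~ ((x == a) && (y == b)) -> ~~ ((x == b) && (y == a)) ->
  (sref i x < sref i y) = (x < y).
Proof.
rewrite !sref_val -!val_eqE val_lift0 /=.
by case: (val x =P val i); case: (val y =P val i); case: (val x =P i.+1);
  case: (val y =P i.+1) => /= *; lia.
Qed.

(* As [(sref i * sg) x = sg (sref i x)], relabelling pairs by [sref i] matches
   the inversions of [sref i * sg] with those of [sg], except for {i, i.+1}. *)
Lemma ninv_srefM (sg : 'S_n.+1) :
  ninv (sref i * sg) + (sg b < sg a) = ninv sg + (sg a < sg b).
Proof.
rewrite /ninv; set X := [set p | _]; set Y := [set p | _].
pose swap (p : 'I_n.+1 * 'I_n.+1) := (sref i p.1, sref i p.2).
have swap_inj : injective swap.
  by move=> [x1 x2] [y1 y2] [/perm_inj -> /perm_inj ->].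
rewrite -(card_preimset Y swap_inj); set Y' := swap @^-1: Y.
rewrite (cardsD1 (a, b) X) (cardsD1 (b, a) (X :\ (a, b))).
rewrite (cardsD1 (a, b) Y') (cardsD1 (b, a) (Y' :\ (a, b))).
have -> : X :\ (a, b) :\ (b, a) = Y' :\ (a, b) :\ (b, a).
  apply/setP => -[x y]; rewrite !inE /= !xpair_eqE.
  case: (boolP ((x == a) && (y == b))) => [|ne_ab] /=; first by rewrite andbF.
  case: (boolP ((x == b) && (y == a))) => [|ne_ba] //=.
  by rewrite !permM (sref_lt ne_ab ne_ba).
have lt_ab : a < b by rewrite val_lift0.
have ne_ba : (b == a) = false by rewrite -val_eqE val_lift0 gtn_eqF.
have lt_ba : (b < a) = false by rewrite ltnNge (ltnW lt_ab).
rewrite !inE !xpair_eqE !permM /swap !(sref_a, sref_b) [a == b]eq_sym ne_ba lt_ab lt_ba /=.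
by case: (sg a < sg b); case: (sg b < sg a) => /=; lia.
Qed.

Lemma sref_perm_neq (sg : 'S_n.+1) : sg a != sg b :> nat.
Proof.
apply: contraTneq isT => /val_inj/perm_inj/(congr1 val).
by rewrite val_lift0 /=; lia.
Qed.

Lemma ninv_srefM_asc (sg : 'S_n.+1) :
  sg a < sg b -> ninv (sref i * sg) = (ninv sg).+1.
Proof. by move=> asc; have := ninv_srefM sg; rewrite asc ltnNge ltnW //; lia. Qed.

Lemma ninv_srefM_desc (sg : 'S_n.+1) :
  ((ninv (sref i * sg)).+1 == ninv sg) = (sg b < sg a).
Proof.
have := ninv_srefM sg; have := sref_perm_neq sg.
by case: ltngtP => // _ _; case: (sg b < sg a) => /= e; apply/eqP; lia.
Qed.

End AdjacentTransposition.

Section SymmetricLength.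
Variable n : nat.
Implicit Type sg : 'S_n.+1.

Lemma homo_adjacent_perm (r : rel nat) sg : transitive r ->
    (forall i : 'I_n, r (sg (widen_ord (leqnSn n) i)) (sg (lift ord0 i))) ->
  forall x y : 'I_n.+1, x < y -> r (sg x) (sg y).
Proof.
move=> r_trans r_adj; pose g k := val (sg (inord k)).
have g_homo : {in gtn n.+1 &, {homo g : k l / k < l >-> r k l}}.
  apply: homo_ltn_in => // [k l _ lt_ln m /andP[_ lt_ml] | k _ lt_kn].
    exact: ltn_trans lt_ml lt_ln.
  have {}lt_kn : k < n := lt_kn; rewrite /g.
  have -> : inord k = widen_ord (leqnSn n) (Ordinal lt_kn).
    exact/val_inj/inordK/ltnW.
  have -> : inord k.+1 = lift ord0 (Ordinal lt_kn).
    by apply/val_inj; rewrite val_lift0; exact: inordK.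
  exact: r_adj.
by move=> x y lt_xy; have := g_homo x y (ltn_ord x) (ltn_ord y) lt_xy; rewrite /g !inord_val.
Qed.

Lemma perm_eq1_of_ascents sg :
  (forall i : 'I_n, sg (widen_ord (leqnSn n) i) < sg (lift ord0 i)) -> sg = 1.
Proof.
move=> asc; have incr := homo_adjacent_perm ltn_trans asc.
have g_id : {in gtn n.+1, forall k, val (sg (inord k)) = k}.
  apply: incr_bounded_id => [k l lt_k lt_l lt_kl | k _]; last exact: ltn_ord.
  by apply: incr; rewrite !inordK.
apply/permP => x; apply/val_inj; rewrite perm1 -{1}(inord_val x).
exact: g_id (ltn_ord x).
Qed.

Lemma ninv_srefM_pm (i : 'I_n) sg :
  ninv (sref i * sg) = (ninv sg).+1 \/ (ninv (sref i * sg)).+1 = ninv sg.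
Proof.
have [desc | asc] := ltnP (sg (lift ord0 i)) (sg (widen_ord (leqnSn n) i)).
  by right; apply/eqP; rewrite ninv_srefM_desc.
by left; rewrite ninv_srefM_asc // ltn_neqAle sref_perm_neq.
Qed.

Lemma ninv_descent sg : sg != 1 -> exists i, (ninv (sref i * sg)).+1 = ninv sg.
Proof.
move=> ne_sg1.
case: (pickP (fun i : 'I_n => sg (lift ord0 i) < sg (widen_ord (leqnSn n) i))).
  by move=> i desc; exists i; apply/eqP; rewrite ninv_srefM_desc.
move=> no_desc; case/eqP: ne_sg1; apply: perm_eq1_of_ascents => i.
by rewrite ltn_neqAle sref_perm_neq leqNgt no_desc.
Qed.

Lemma ninv_longest sg : (forall i : 'I_n, (ninv (sref i * sg)).+1 = ninv sg) ->
  forall u : 'S_n.+1, ninv u <= ninv sg.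
Proof.
move=> desc u; apply/ninv_le_reversal/(homo_adjacent_perm (r := gtn)).
  by move=> y x z lt_yx lt_zy; apply: ltn_trans lt_zy lt_yx.
by move=> i; rewrite /= -ninv_srefM_desc desc.
Qed.

End SymmetricLength.

Section ProductOfSymmetricGroups.
Variable n : nat.

Definition lenAA (w : WAA n) : nat := ninv w.1 + ninv w.2.

Lemma mulWAA (x y : WAA n) : x * y = (x.1 * y.1, x.2 * y.2).
Proof. by []. Qed.

Lemma SAAP s : s \in SAA n -> (exists i, s = (sref i, 1)) \/ (exists i, s = (1, sref i)).
Proof. by rewrite inE => /orP[/imsetP[i _ ->] | /imsetP[i _ ->]]; [left | right]; exists i. Qed.

Lemma mem_SAA1 (i : 'I_n) : ((sref i, 1) : WAA n) \in SAA n.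
Proof. by rewrite inE imset_f. Qed.

Lemma mem_SAA2 (i : 'I_n) : ((1, sref i) : WAA n) \in SAA n.
Proof. by rewrite inE imset_f ?orbT. Qed.

Lemma mulSS_AA : {in SAA n, forall s, s * s = 1}.
Proof. by move=> s /SAAP[[i ->] | [i ->]]; rewrite mulWAA /= tperm2 mulg1. Qed.

Lemma lenAA1 : lenAA 1 = 0.
Proof. by rewrite /lenAA !ninv1. Qed.

Lemma lenAA_SM : {in SAA n, forall s w,
  lenAA (s * w) = (lenAA w).+1 \/ (lenAA (s * w)).+1 = lenAA w}.
Proof.
move=> s /SAAP[[i ->] | [i ->]] w; rewrite /lenAA mulWAA /= mul1g.
  by case: (ninv_srefM_pm i w.1) => [-> | <-]; [left | right]; rewrite addSn.
by case: (ninv_srefM_pm i w.2) => [-> | <-]; [left | right]; rewrite addnS.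
Qed.

Lemma lenAA_descent w : w != 1 -> exists2 s, s \in SAA n & (lenAA (s * w)).+1 = lenAA w.
Proof.
case: w => w1 w2 ne_w1; rewrite /lenAA.
have [eq_w1 | /ninv_descent[i desc]] := eqVneq w1 1; last first.
  by exists (sref i, 1); rewrite ?mem_SAA1 // mulWAA /= mul1g -desc addSn.
have /ninv_descent[i desc] : w2 != 1.
  by apply: contraNneq ne_w1 => eq_w2; rewrite eq_w1 eq_w2.
by exists (1, sref i); rewrite ?mem_SAA2 // mulWAA /= mul1g -desc addnS.
Qed.

Lemma lenAA_longest w : {in SAA n, forall s, (lenAA (s * w)).+1 = lenAA w} ->
  forall u, lenAA u <= lenAA w.
Proof.
case: w => w1 w2 desc [u1 u2]; apply: leq_add; apply: ninv_longest => i.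
  by have := desc _ (mem_SAA1 i); rewrite /lenAA mulWAA /= mul1g -addSn => /addIn.
by have := desc _ (mem_SAA2 i); rewrite /lenAA mulWAA /= mul1g -addnS => /addnI.
Qed.

Lemma swap_not_conj (tau : WAA n -> WAA n) :
    {in S1 n, forall s, tau s \in S2 n} -> {in S2 n, forall s, tau s \in S1 n} ->
  forall s w, s \in SAA n -> tau s != s ^ w.
Proof.
move=> tau12 tau21 s [w1 w2]; rewrite inE => /orP[sS1 | sS2].
  have /imsetP[j _ ->] := tau12 _ sS1; case/imsetP: sS1 => i _ ->.
  by apply/eqP => -[_]; rewrite mul1g mulVg; apply/eqP/sref_neq1.
have /imsetP[j _ ->] := tau21 _ sS2; case/imsetP: sS2 => i _ ->.
by apply/eqP => -[+ _]; rewrite mul1g mulVg; apply/eqP/sref_neq1.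
Qed.

End ProductOfSymmetricGroups.

Theorem lemma3p7 (n : nat) (hn : 1 <= n)
  (Ch : Type) (delta : Ch -> Ch -> WAA n)
  (hB : is_building (SAA n) delta) (hthick : thick (SAA n) delta)
  (phi : Ch -> Ch) (tau : WAA n -> WAA n)
  (haut : is_automorphism (SAA n) delta phi tau)
  (hswap : {in S1 n, forall s, tau s \in S2 n} /\ {in S2 n, forall s, tau s \in S1 n})
  (hinv : {in SAA n, forall s, tau (tau s) = s}) :
  ~ domestic (SAA n) delta phi.
Proof.
case: hB => inhCh WD1 WD2 WD3; case: haut => _ tauS _ phi_adj; case: hswap => tau12 tau21.
have wlenE := wlenE (@mulSS_AA n) (@lenAA1 n) (@lenAA_SM n) (@lenAA_descent n).
apply: (not_domestic_of_twist (@mulSS_AA n) (@lenAA1 n) (@lenAA_SM n) (@lenAA_descent n)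
  WD1 _ WD3 tauS (fun C D s sS => (phi_adj C D s sS).1) hthick
  (swap_not_conj tau12 tau21) (@lenAA_longest n) inhCh).
by move=> C D C' s sS C'C; rewrite -!wlenE; apply: WD2.
Qed.
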